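(* Let $X$ be a unital commutative semiring which is idempotent, linearly ordered by its intrinsic order, and such that for all $a,b,x\in X$ with $a<b$ one has $ax=0$ or $ax<bx$. The following are equivalent: (1) $\tilde{\mathcal{S}}(X)$ is fully elementary; (2) $\tilde{\mathcal{S}}(X)$ is Frobenius; (3) $X=\{0\}$.
   Context: A semiring $(X,+,0,\cdot)$: $(X,+,0)$ commutative monoid, $(X,\cdot)$ semigroup, distributivity, $0$ absorbing. Idempotent: $x+x=x$. Intrinsic order: $a\le b$ iff $a+x=b$ for some $x$; $a<b$ means $a\le b$, $a\ne b$. $\mathcal{S}(X)=X\times X$ with $(a',a'')+(b',b'')=(a'+b',a''+b'')$, $(a',a'')(b',b'')=(a'b'+a''b'',a'b''+a''b')$. Relation: $(a',a'')\sim(b',b'')$ iff $(a',a'')=(b',b'')$ or ($a'\ne a''$, $b'\ne b''$, $a'+b''=a''+b'$). Under the hypotheses $\sim$ is a congruence and $\tilde{\mathcal{S}}(X)=\mathcal{S}(X)/\sim$ is a unital commutative semiring. A unital commutative semiring $Y$ is Frobenius if $(x+y)^n=x^n+y^n$ for all $x,y\in Y$, $n\ge1$; polynomials over $Y$ are functions represented by formal expressions $\sum_k a_k\prod_j x_j^{d_{k,j}}$; symmetric if represented by an expression closed (with coefficients) under permuting variables; $e_j$ is the sum of all products of $j$ distinct variables; $Y$ is fully elementary if for every $n$ every symmetric polynomial in $n$ variables equals $r(e_1,\dots,e_n)$ on $Y^n$ for some polynomial $r$. *)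

From HB Require Import structures.
From mathcomp Require Import all_boot all_order all_algebra all_fingroup.
Set Implicit Arguments. Unset Strict Implicit. Unset Printing Implicit Defensive.
Import GRing.Theory.
Local Open Scope ring_scope.

Section Semiring.
Variable X : comPzSemiRingType.

Definition ile (a b : X) : Prop := exists x, a + x = b.
Definition ilt (a b : X) : Prop := ile a b /\ a <> b.

Definition idempotent_sr : Prop := forall x : X, x + x = x.
Definition linear_intrinsic : Prop := forall a b : X, ile a b \/ ile b a.
Definition mono_cond : Prop :=
  forall a b x : X, ilt a b -> a * x = 0 \/ ilt (a * x) (b * x).

(* S(X) = X x X, represented by pairs *)
Definition spair := (X * X)%type.
Definition szero : spair := (0, 0).
Definition sone : spair := (1, 0).
Definition sadd (p q : spair) : spair := (p.1 + q.1, p.2 + q.2).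
Definition smul (p q : spair) : spair :=
  (p.1 * q.1 + p.2 * q.2, p.1 * q.2 + p.2 * q.1).
Fixpoint spow (p : spair) (n : nat) : spair :=
  if n is m.+1 then smul p (spow p m) else sone.

(* the relation ~ ; equality in the quotient S~(X) *)
Definition ssim (p q : spair) : Prop :=
  p = q \/ (p.1 <> p.2 /\ q.1 <> q.2 /\ p.1 + q.2 = p.2 + q.1).

Definition ssum (s : seq spair) : spair := foldr sadd szero s.
Definition sprod (s : seq spair) : spair := foldr smul sone s.

Definition frobenius : Prop :=
  forall (x y : spair) (n : nat), (1 <= n)%N ->
    ssim (spow (sadd x y) n) (sadd (spow x n) (spow y n)).

(* formal polynomial expressions in n variables over S~(X):
   a list of terms (coefficient, exponent vector) *)
Definition sterm (n : nat) := (spair * {ffun 'I_n -> nat})%type.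
Definition sexpr (n : nat) := seq (sterm n).

Definition eval_term n (t : sterm n) (v : 'I_n -> spair) : spair :=
  smul t.1 (sprod [seq spow (v j) (t.2 j) | j <- enum 'I_n]).
Definition eval_expr n (P : sexpr n) (v : 'I_n -> spair) : spair :=
  ssum [seq eval_term t v | t <- P].

Definition perm_term n (s : 'S_n) (t : sterm n) : sterm n :=
  (t.1, [ffun j => t.2 (s j)]).

Definition sym_expr n (P : sexpr n) : Prop :=
  forall s : 'S_n, perm_eq [seq perm_term s t | t <- P] P.

Definition elem n (j : nat) (v : 'I_n -> spair) : spair :=
  ssum (map (fun A : {set 'I_n} => sprod [seq v i | i in A])
         (enum [set A : {set 'I_n} | #|A| == j])).

Definition fully_elementary : Prop :=
  forall (n : nat) (P : sexpr n), sym_expr P ->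
    exists r : sexpr n, forall v : 'I_n -> spair,
      ssim (eval_expr P v) (eval_expr r (fun j : 'I_n => elem j.+1 v)).

End Semiring.

From mathcomp Require Import all_boot all_order all_algebra all_fingroup ring.
Set Implicit Arguments.
Unset Strict Implicit.
Unset Printing Implicit Defensive.
Local Open Scope ring_scope.
Import GRing.Theory.

(* If 1 <> 0, Frobenius fails at x = (1,0), y = (0,1): (x + y)^2 = (1,1),
   whose ~-class is a singleton, while x^2 + y^2 = (1,0).  For full
   elementarity take x^2 + y^2 at the points ((1,1),(0,0)) and ((1,0),(0,1)).
   Their elementary symmetric values are (1,1),(0,0) and (1,1),(0,1), so any
   polynomial r in e_1, e_2 is larger at the second point for the natural
   preorder of S(X), polynomial functions being monotone.  At the first point
   r must take the diagonal value (1,1), hence at the second a value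
   (1 + g, 1 + h); being ~ to (1,0) then forces 1 + h = 0 or 1 + g = 1 + h,
   and in an idempotent semiring 1 + h = 0 already gives 1 = 0. *)

Section Spair.
Variable X : comPzSemiRingType.
Implicit Types (a b : X) (p q : spair X).

Lemma spairP p q : p.1 = q.1 -> p.2 = q.2 -> p = q.
Proof. by case: p q => [a b] [c d] /= -> ->. Qed.

Lemma ssim_diag a q : ssim (a, a) q -> q = (a, a).
Proof. by case=> [<- // | [/= /(_ erefl)]]. Qed.

Lemma ssim_trivial : (forall x : X, x = 0) -> forall p q, ssim p q.
Proof. by move=> X0 [a b] [c d]; left; rewrite (X0 a) (X0 b) (X0 c) (X0 d). Qed.

Lemma one_eq0_trivial : (1 : X) = 0 -> forall x : X, x = 0.
Proof. by move=> eq10 x; rewrite -[x]mulr1 eq10 mulr0. Qed.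

Lemma fully_elementary_trivial : (forall x : X, x = 0) -> fully_elementary X.
Proof. by move=> X0 n P _; exists [::] => v; apply: ssim_trivial. Qed.

Lemma frobenius_trivial : (forall x : X, x = 0) -> frobenius X.
Proof. by move=> X0 x y n _; apply: ssim_trivial. Qed.

Definition sle p q := exists g, q = sadd p g.

Lemma sle_refl p : sle p p.
Proof. by exists (szero X); apply: spairP => /=; ring. Qed.

Lemma sle0 p : sle (szero X) p.
Proof. by exists p; apply: spairP => /=; ring. Qed.

Lemma sle_sadd p q p' q' : sle p q -> sle p' q' -> sle (sadd p p') (sadd q q').
Proof. by move=> [g ->] [h ->]; exists (sadd g h); apply: spairP => /=; ring. Qed.

Lemma sle_smul p q p' q' : sle p q -> sle p' q' -> sle (smul p p') (smul q q').
Proof.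
move=> [g ->] [h ->]; exists (sadd (smul p h) (sadd (smul g p') (smul g h))).
by apply: spairP => /=; ring.
Qed.

Lemma sle_spow p q k : sle p q -> sle (spow p k) (spow q k).
Proof. by move=> le_pq; elim: k => [|k IHk] /=; [apply: sle_refl | apply: sle_smul]. Qed.

Lemma sle_sprod (T : Type) (s : seq T) (f g : T -> spair X) :
  (forall i, sle (f i) (g i)) -> sle (sprod (map f s)) (sprod (map g s)).
Proof. by move=> le_fg; elim: s => [|i s IHs] /=; [apply: sle_refl | apply: sle_smul]. Qed.

Lemma sle_ssum (T : Type) (s : seq T) (f g : T -> spair X) :
  (forall i, sle (f i) (g i)) -> sle (ssum (map f s)) (ssum (map g s)).
Proof. by move=> le_fg; elim: s => [|i s IHs] /=; [apply: sle_refl | apply: sle_sadd]. Qed.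

Lemma sle_eval_expr n (r : sexpr X n) (v w : 'I_n -> spair X) :
  (forall j, sle (v j) (w j)) -> sle (eval_expr r v) (eval_expr r w).
Proof.
move=> le_vw; apply: sle_ssum => t; apply: sle_smul; first exact: sle_refl.
by apply: sle_sprod => j; apply: sle_spow.
Qed.

Lemma ssumE (s : seq (spair X)) : ssum s = (\sum_(p <- s) p.1, \sum_(p <- s) p.2).
Proof. by elim: s => [|p s /= ->]; rewrite ?big_nil ?big_cons. Qed.

Lemma ssum_perm (s t : seq (spair X)) : perm_eq s t -> ssum s = ssum t.
Proof. by move=> eq_st; rewrite !ssumE (perm_big _ eq_st) [X in (_, X)](perm_big _ eq_st). Qed.

Lemma elem1 n (v : 'I_n -> spair X) :
  elem 1 v = ssum [seq v i | i <- enum 'I_n].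
Proof.
have sing: perm_eq (enum [set A : {set 'I_n} | #|A| == 1%N]) [seq [set i] | i <- enum 'I_n].
  apply: uniq_perm; rewrite ?enum_uniq ?(map_inj_uniq (@set1_inj _)) ?enum_uniq //.
  move=> A; rewrite mem_enum inE; apply/cards1P/mapP => [[i ->]|[i _ ->]].
    by exists i; rewrite ?mem_enum.
  by exists i.
rewrite /elem (ssum_perm (perm_map _ sing)) -map_comp.
congr ssum; apply: eq_map => i /=; rewrite /image_mem enum_set1 /=.
by apply: spairP => /=; ring.
Qed.

Lemma elem_card n (v : 'I_n -> spair X) :
  elem n v = sprod [seq v i | i <- enum 'I_n].
Proof.
have full: perm_eq (enum [set A : {set 'I_n} | #|A| == n]) [:: [set: 'I_n]].
  apply: uniq_perm; rewrite ?enum_uniq // => A; rewrite mem_enum !inE.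
  rewrite eqEcard subsetT cardsT card_ord /=; apply/eqP/idP => [-> //|le_nA].
  by apply/eqP; rewrite eqn_leq le_nA -[n in (_ <= n)%N]card_ord max_card.
rewrite /elem (ssum_perm (perm_map _ full)) /= /image_mem enum_setT -enumT.
by apply: spairP => /=; ring.
Qed.

Lemma enum_ord2 : enum 'I_2 = [:: ord0; ord_max].
Proof. by rewrite enum_ordSl enum_ordSl enum_ord0 /=; congr [:: _; _]; apply: val_inj. Qed.

Definition monomial_power n k (j : 'I_n) : sterm X n :=
  (sone X, [ffun i => if i == j then k else 0%N]).

Definition power_sum n k : sexpr X n := [seq monomial_power k j | j <- enum 'I_n].

Lemma perm_monomial_power n k (s : 'S_n) (j : 'I_n) :
  perm_term s (monomial_power k j) = monomial_power k ((s^-1)%g j).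
Proof.
congr pair; apply/ffunP => i.
by rewrite !ffunE -{1}(permKV s j) (inj_eq perm_inj).
Qed.

Lemma power_sum_sym n k : sym_expr (power_sum n k).
Proof.
move=> s; rewrite /power_sum -map_comp (eq_map (perm_monomial_power k s)).
rewrite (map_comp (monomial_power k)); apply: perm_map.
apply: uniq_perm; rewrite ?(map_inj_uniq perm_inj) ?enum_uniq // => j.
by rewrite mem_enum; apply/mapP; exists (s j); rewrite ?mem_enum ?permK.
Qed.

Lemma eval_power_sum22 (v : 'I_2 -> spair X) :
  eval_expr (power_sum 2 2) v = sadd (spow (v ord0) 2) (spow (v ord_max) 2).
Proof.
rewrite /eval_expr /eval_term /power_sum enum_ord2 /= !ffunE /=.
by apply: spairP => /=; ring.
Qed.

Section Idempotent.
Hypothesis idemX : idempotent_sr X.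

Lemma idem_addr_eq0 a b : a + b = 0 -> a = 0.
Proof. by move=> ab0; rewrite -ab0 -{2}(idemX a) -addrA ab0 addr0. Qed.

Lemma ssim_above_diag_eq0 a g : ssim (a, 0) (sadd (a, a) g) -> a = 0.
Proof.
case=> [[_ /esym/idem_addr_eq0 //] | [_ [/= neq]]].
by rewrite addrA idemX add0r => /esym.
Qed.

Lemma frobenius_one_eq0 : frobenius X -> (1 : X) = 0.
Proof.
move=> frobX; have := frobX (1, 0) (0, 1) 2%N isT.
have -> : spow (sadd (1, 0) (0, 1)) 2 = (1, 1) :> spair X.
  by apply: spairP; rewrite /= !(mul1r, mulr1, mul0r, mulr0, add0r, addr0) !idemX.
by move/ssim_diag => [_]; rewrite /= !(mul1r, mulr1, mul0r, mulr0, add0r, addr0).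
Qed.

Definition diag_point (j : 'I_2) : spair X := if j == ord0 then (1, 1) else szero X.
Definition split_point (j : 'I_2) : spair X := if j == ord0 then (1, 0) else (0, 1).

Lemma fully_elementary_one_eq0 : fully_elementary X -> (1 : X) = 0.
Proof.
move=> feX; have [r r_sim] := feX 2%N (power_sum 2 2) (power_sum_sym 2).
have le_elem (j : 'I_2) : sle (elem j.+1 diag_point) (elem j.+1 split_point).
  case: j => [[|[|//]] lt_j2] /=.
    rewrite !elem1 enum_ord2; exists (szero X).
    by apply: spairP => /=; ring.
  exists (elem 2 split_point); rewrite [elem _ diag_point]elem_card enum_ord2.
  by apply: spairP => /=; ring.
have value_diag : eval_expr (power_sum 2 2) diag_point = (1, 1).
  rewrite eval_power_sum22; apply: spairP;
  by rewrite /= !(mul1r, mulr1, mul0r, mulr0, add0r, addr0) idemX.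
have value_split : eval_expr (power_sum 2 2) split_point = (1, 0).
  rewrite eval_power_sum22; apply: spairP;
  by rewrite /= !(mul1r, mulr1, mul0r, mulr0, add0r, addr0) ?idemX.
have [g eq_split] := sle_eval_expr r le_elem.
have r_diag : eval_expr r (fun j => elem j.+1 diag_point) = (1, 1).
  by apply: ssim_diag; rewrite -value_diag.
apply: (@ssim_above_diag_eq0 _ g).
by rewrite -r_diag -eq_split -value_split.
Qed.

End Idempotent.

End Spair.

Theorem proposition6p4 (X : comPzSemiRingType)
  (Hidem : idempotent_sr X) (Hlin : linear_intrinsic X) (Hmono : mono_cond X) :
  (fully_elementary X <-> frobenius X) /\ (frobenius X <-> forall x : X, x = 0).
Proof.
have [fe0 frob0] := (fully_elementary_one_eq0 Hidem, frobenius_one_eq0 Hidem).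
split; split.
- by move/fe0/one_eq0_trivial/frobenius_trivial.
- by move/frob0/one_eq0_trivial/fully_elementary_trivial.
- by move/frob0/one_eq0_trivial.
- exact: frobenius_trivial.
Qed.
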